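(* Let $h$ be the $11$-uniform morphism on $\{0,1,2,3\}$ given by $h(0)=01312021310$, $h(1)=12023132021$, $h(2)=23130203132$, $h(3)=30201310203$. Every factor of the infinite fixed point $h^\omega(0)$ that is a $\tfrac32$-power (i.e., of length $p$ with period $q$ where $p/q=3/2$) has length $a\cdot 11^i$ for some $a\in\{3,6,9,12\}$ and integer $i\ge0$.
   Context: A word $x=x[1..n]$ has period $q$ if $x[i]=x[i+q]$ for $1\le i\le n-q$. For integers $p>q\ge1$, $x$ is a $(p/q)$-power if it has length $p$ and period $q$. *)

From mathcomp Require Import all_boot.
Set Implicit Arguments. Unset Strict Implicit. Unset Printing Implicit Defensive.

Definition h (a : nat) : seq nat :=
  match a with
  | 0 => [:: 0; 1; 3; 1; 2; 0; 2; 1; 3; 1; 0]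
  | 1 => [:: 1; 2; 0; 2; 3; 1; 3; 2; 0; 2; 1]
  | 2 => [:: 2; 3; 1; 3; 0; 2; 0; 3; 1; 3; 2]
  | _ => [:: 3; 0; 2; 0; 1; 3; 1; 0; 2; 0; 3]
  end.

Definition hseq (w : seq nat) : seq nat := flatten (map h w).

Definition hiter (k : nat) : seq nat := iter k hseq [:: 0].

(* The infinite fixed point h^omega(0), as a function nat -> letter:
   its n-th letter (0-indexed) is the n-th letter of h^(n+1)(0), which has
   length 11^(n+1) > n; h^k(0) is a prefix of h^(k+1)(0) since h(0) starts with 0. *)
Definition hfix (n : nat) : nat := nth 0 (hiter n.+1) n.

Definition factor (i p : nat) : seq nat := [seq hfix (i + j) | j <- iota 0 p].

Definition has_period (x : seq nat) (q : nat) : Prop :=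
  forall j, j + q < size x -> nth 0 x j = nth 0 x (j + q).

Definition is_power (x : seq nat) (p q : nat) : Prop :=
  [/\ 1 <= q, q < p, size x = p & has_period x q].

From mathcomp Require Import all_boot zify.

Set Implicit Arguments.
Unset Strict Implicit.

(* Write a 3/2-power of the fixed point as [x y x] with |x| = m, so its period
   is 2m.  Since h(a) starts with a, sampling every 11th letter maps h^omega(0)
   to itself; hence if 11 divides m the power desubstitutes to one with
   m / 11.  If 11 does not divide m and m >= 21, the first x contains a whole
   aligned block h(a), whose copy 2m letters later straddles two blocks at the
   nonzero offset 2m mod 11, and no h(a) occurs there.  The values 5 <= m <= 20
   are excluded by inspecting h^2 of every two-letter word, leaving
   m = a * 11^k with a <= 4. *)

Lemma size_h a : size (h a) = 11.
Proof. by case: a => [|[|[|a]]]. Qed.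

Lemma nth_h_lt4 a j : nth 0 (h a) j < 4.
Proof.
case: (ltnP j 11) => Hj; last by rewrite nth_default // size_h.
have h_lt4 : all (fun x => x < 4) (h a) by case: a => [|[|[|a]]].
by apply: (allP h_lt4); apply: mem_nth; rewrite size_h.
Qed.

Lemma nth_h0 a : a < 4 -> nth 0 (h a) 0 = a.
Proof. by case: a => [|[|[|[|a]]]]. Qed.

Lemma hseq_cat s t : hseq (s ++ t) = hseq s ++ hseq t.
Proof. by rewrite /hseq map_cat flatten_cat. Qed.

Lemma size_hseq w : size (hseq w) = 11 * size w.
Proof.
elim: w => [|x w IH] //.
by rewrite -cat1s hseq_cat size_cat IH /hseq /= cats0 size_h mulnS.
Qed.

Lemma nth_hseq w n j : n < size w -> j < 11 ->
  nth 0 (hseq w) (11 * n + j) = nth 0 (h (nth 0 w n)) j.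
Proof.
elim: w n => [|x w IH] [|n] //= Hn Hj; rewrite -cat1s hseq_cat nth_cat /hseq /= cats0 size_h.
  by rewrite muln0 Hj.
have -> : 11 * n.+1 + j < 11 = false by lia.
by rewrite (_ : 11 * n.+1 + j - 11 = 11 * n + j); [apply: IH | lia].
Qed.

Lemma size_hiter k : size (hiter k) = 11 ^ k.
Proof. by elim: k => [|k IH] //=; rewrite size_hseq IH expnS. Qed.

Lemma hiter_extend1 k : exists s, hiter k.+1 = hiter k ++ s.
Proof.
elim: k => [|k [s Hs]]; first by exists (behead (h 0)).
exists (hseq s).
by rewrite (_ : hiter k.+2 = hseq (hiter k.+1)) // {1}Hs hseq_cat.
Qed.

Lemma hiter_extend k d : exists s, hiter (k + d) = hiter k ++ s.
Proof.
elim: d => [|d [s Hs]]; first by exists [::]; rewrite addn0 cats0.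
have [t Ht] := hiter_extend1 (k + d).
by exists (s ++ t); rewrite addnS Ht Hs catA.
Qed.

Lemma ltn_exp11S n : n < 11 ^ n.+1.
Proof. by apply: leq_trans (ltn_expl n (isT : 1 < 11)) _; rewrite leq_pexp2l. Qed.

Lemma hfixE k n : n < 11 ^ k -> hfix n = nth 0 (hiter k) n.
Proof.
have nth_hiter_ext k' d : n < 11 ^ k' -> nth 0 (hiter (k' + d)) n = nth 0 (hiter k') n.
  by case: (hiter_extend k' d) => s -> Hn; rewrite nth_cat size_hiter Hn.
move=> Hn; rewrite /hfix -(nth_hiter_ext _ k (ltn_exp11S n)) -(nth_hiter_ext _ n.+1 Hn).
by rewrite addnC.
Qed.

Lemma hfix_mul11 n j : j < 11 -> hfix (11 * n + j) = nth 0 (h (hfix n)) j.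
Proof.
move=> Hj; rewrite (@hfixE n.+2); last by rewrite expnS; have := ltn_exp11S n; lia.
by rewrite (_ : hiter n.+2 = hseq (hiter n.+1)) // nth_hseq ?size_hiter ?ltn_exp11S.
Qed.

Lemma hfix_lt4 n : hfix n < 4.
Proof. by case: n => [|n] //; rewrite (divn_eq n.+1 11) mulnC hfix_mul11 ?ltn_mod // nth_h_lt4. Qed.

Lemma hfix_mul11_0 n : hfix (11 * n) = hfix n.
Proof. by rewrite -[11 * n]addn0 hfix_mul11 // nth_h0 // hfix_lt4. Qed.

Lemma size_factor i p : size (factor i p) = p.
Proof. by rewrite size_map size_iota. Qed.

Lemma nth_factor i p j : j < p -> nth 0 (factor i p) j = hfix (i + j).
Proof. by move=> Hj; rewrite (nth_map 0) ?size_iota // nth_iota. Qed.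

Lemma factor2 u : factor u 2 = [:: hfix u; hfix u.+1].
Proof. by rewrite /factor /= addn0 addn1. Qed.

Lemma factor_mul11 u n : factor (11 * u) (11 * n) = hseq (factor u n).
Proof.
apply: (@eq_from_nth _ 0); first by rewrite size_hseq !size_factor.
rewrite size_factor => w Hw.
have Hw11 : w %/ 11 < n by rewrite ltn_divLR // mulnC.
rewrite nth_factor // [in RHS](divn_eq w 11) (mulnC _ 11) nth_hseq ?size_factor ?ltn_mod //.
by rewrite nth_factor // -hfix_mul11 ?ltn_mod // mulnDr -addnA (mulnC 11 (w %/ 11)) -divn_eq.
Qed.

Lemma factor_hiter k u n : factor (11 ^ k * u) (11 ^ k * n) = iter k hseq (factor u n).
Proof. by elim: k => [|k IH]; rewrite ?mul1n // /= -IH expnS -!mulnA factor_mul11. Qed.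

Lemma hfix_block k u n w : w < 11 ^ k * n ->
  hfix (11 ^ k * u + w) = nth 0 (iter k hseq (factor u n)) w.
Proof. by move=> Hw; rewrite -factor_hiter nth_factor. Qed.

Lemma h_no_misaligned_occurrence r a b c : 0 < r < 11 -> a < 4 -> b < 4 -> c < 4 ->
  exists2 j, j < 11 & nth 0 (h a) j != nth 0 (hseq [:: b; c]) (j + r).
Proof.
have in4 x : x < 4 -> x \in iota 0 4 by rewrite mem_iota.
have : all (fun r => all (fun a => all (fun b => all (fun c =>
    has (fun j => nth 0 (h a) j != nth 0 (hseq [:: b; c]) (j + r)) (iota 0 11))
  (iota 0 4)) (iota 0 4)) (iota 0 4)) (iota 1 10) by vm_compute.
move=> + Hr Ha Hb Hc.
move=> /allP/(_ r ltac:(rewrite mem_iota; lia))/allP/(_ a (in4 _ Ha)).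
move=> /allP/(_ b (in4 _ Hb))/allP/(_ c (in4 _ Hc))/hasP[j].
by rewrite mem_iota => Hj; exists j.
Qed.

Lemma h2_pair_no_short_three_halves v a b m : v < 121 -> a < 4 -> b < 4 ->
  5 <= m <= 20 -> ~~ (11 %| m) ->
  exists2 t, t < m & nth 0 (iter 2 hseq [:: a; b]) (v + t)
                     != nth 0 (iter 2 hseq [:: a; b]) (v + t + 2 * m).
Proof.
have in4 x : x < 4 -> x \in iota 0 4 by rewrite mem_iota.
have : all (fun v => all (fun a => all (fun b => let w := iter 2 hseq [:: a; b] in
  all (fun m => (~~ (11 %| m)) ==>
    has (fun t => nth 0 w (v + t) != nth 0 w (v + t + 2 * m)) (iota 0 m))
  (iota 5 16)) (iota 0 4)) (iota 0 4)) (iota 0 121) by vm_compute.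
move=> + Hv Ha Hb Hm H11.
move=> /allP/(_ v ltac:(rewrite mem_iota; lia))/allP/(_ a (in4 _ Ha)).
move=> /allP/(_ b (in4 _ Hb))/allP/(_ m ltac:(rewrite mem_iota; lia)).
move=> /implyP/(_ H11)/hasP[t].
by rewrite mem_iota => Ht; exists t.
Qed.

Definition three_halves_at (i m : nat) : Prop :=
  forall t, t < m -> hfix (i + t) = hfix (i + t + 2 * m).

Lemma three_halves_of_power i p q :
  2 * p = 3 * q -> is_power (factor i p) p q -> three_halves_at i (p - q).
Proof.
move=> Hpq [_ _ Hsize Hper] t Ht.
have := Hper t; rewrite Hsize !nth_factor; try lia.
by rewrite addnA (_ : 2 * (p - q) = q) //; lia.
Qed.

Lemma three_halves_desubst i m :
  three_halves_at i (11 * m) -> three_halves_at ((i + 10) %/ 11) m.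
Proof.
move=> Hper t Ht; set u := (i + 10) %/ 11.
have Hu : i <= 11 * u <= i + 10 by rewrite /u; lia.
have := Hper (11 * (u + t) - i) ltac:(lia).
rewrite (_ : i + _ = 11 * (u + t)); last by lia.
by rewrite (_ : _ + 2 * (11 * m) = 11 * (u + t + 2 * m)) ?hfix_mul11_0 //; lia.
Qed.

Lemma three_halves_long i m : 21 <= m -> ~~ (11 %| m) -> ~ three_halves_at i m.
Proof.
move=> Hm H11 Hper; set u := (i + 10) %/ 11.
have Hu : i <= 11 * u <= i + 10 by rewrite /u; lia.
set q := (2 * m) %/ 11; set r := (2 * m) %% 11.
have Hqr : 2 * m = 11 * q + r by rewrite /q /r; lia.
have Hr : 0 < r < 11 by rewrite /r; lia.
have [j Hj Hneq] := h_no_misaligned_occurrence Hr (hfix_lt4 u) (hfix_lt4 (u + q)) (hfix_lt4 (u + q).+1).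
rewrite -factor2 in Hneq; move/negP: Hneq; apply; apply/eqP.
have := Hper (11 * u + j - i) ltac:(lia).
rewrite (_ : i + _ = 11 * u + j); last by lia.
rewrite (_ : 11 * u + j + 2 * m = 11 ^ 1 * (u + q) + (j + r)); last by rewrite expn1; lia.
by rewrite hfix_mul11 // (@hfix_block _ _ 2) // expn1; lia.
Qed.

Lemma three_halves_short i m : 5 <= m <= 20 -> ~~ (11 %| m) -> ~ three_halves_at i m.
Proof.
move=> Hm H11 Hper.
set u := i %/ 11 ^ 2; set v := i %% 11 ^ 2.
have Hi : i = 11 ^ 2 * u + v by rewrite /u /v mulnC -divn_eq.
have Hv : v < 121 by rewrite /v ltn_mod.
have [t Ht Hneq] := h2_pair_no_short_three_halves Hv (hfix_lt4 u) (hfix_lt4 u.+1) Hm H11.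
rewrite -factor2 in Hneq; move/negP: Hneq; apply; apply/eqP.
have := Hper t Ht.
by rewrite Hi -!(addnA (11 ^ 2 * u)) !(@hfix_block 2 u 2) // !(expnS, expn0); lia.
Qed.

Lemma three_halves_length i m : 0 < m -> three_halves_at i m ->
  exists a k, 0 < a <= 4 /\ m = a * 11 ^ k.
Proof.
elim/ltn_ind: m i => m IH i Hm0 Hper.
have [Hm4 | Hm4] := leqP m 4; first by exists m, 0; rewrite expn0 muln1 Hm0 Hm4.
have [/dvdnP[m' Hm'] | H11] := boolP (11 %| m).
  rewrite Hm' mulnC in Hper.
  have [a [k [Ha Hm'k]]] := IH m' ltac:(lia) _ ltac:(lia) (three_halves_desubst Hper).
  by exists a, k.+1; rewrite Hm' Hm'k expnS mulnCA mulnC.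
have [Hm20 | Hm20] := leqP m 20.
  by case: (three_halves_short (m := m) ltac:(lia) H11 Hper).
by case: (three_halves_long Hm20 H11 Hper).
Qed.

Theorem mainTheorem9 :
  forall (i p q : nat),
    2 * p = 3 * q ->
    is_power (factor i p) p q ->
    exists (a k : nat), a \in [:: 3; 6; 9; 12] /\ p = a * 11 ^ k.
Proof.
move=> i p q Hpq Hpow; have [Hq _ _ _] := Hpow.
have Hm0 : 0 < p - q by lia.
have [a [k [Ha Hm]]] := three_halves_length Hm0 (three_halves_of_power Hpq Hpow).
exists (3 * a), k; split; last by rewrite -mulnA -Hm; lia.
by case: a Ha {Hm} => [|[|[|[|[|a]]]]].
Qed.
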